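(* Let $z\in I^+$, $X\subseteq N$, and suppose $\varphi(\overline z^X)=(B,Y,M,A,X)$ (in particular $\varphi(\overline z^X)\ne\mathbf 0$). Then for all $C\in X$ and $D\in Y$ the following are equivalent: (i) $C\,\mathcal R_X\,A$ and $B\,\mathcal R_Y\,D$; (ii) there exist sentential forms $u,v$ of $\overline{\mathcal G}$ such that $(C,X)\Rightarrow^*_{\overline{\mathcal G}}u\,(D,Y)[\overline z^X]\,v$.
   Context: Let $\mathcal{G}=(N,T,I,P,S)$ be an indexed grammar: $N$ (non-terminals), $T$ (terminals), $I$ (stack symbols) finite pairwise disjoint alphabets, $S\in N$, and productions of the forms $A\to w$ ($w\in T^*$), $A\to BC$, $A\to Bf$, $Af\to B$ ($A,B,C\in N$, $f\in I$). Terms $A[z]$ ($A\in N$, $z\in I^*$ the stack, top on the left; $A$ means $A[\varepsilon]$); sentential forms are words over terms and terminals; derivation: $uA[z]v\Rightarrow uB[z]C[z]v$ if $A\to BC\in P$; $uA[z]v\Rightarrow uB[fz]v$ if $A\to Bf\in P$; $uA[fz]v\Rightarrow uB[z]v$ if $Af\to B\in P$; $uA[z]v\Rightarrow uwv$ if $A\to w\in P$, $w\in T^*$; $\Rightarrow^*$ is the reflexive transitive closure. For $X\subseteq N$, $z\in I^*$: $z\cdot X=\{A\in N:\exists u\in(X\cup T)^*, A[z]\Rightarrow^*u\}$ (non-terminals in $u$ with empty stack); $\mathrm{Useful}=\{A:\exists w\in T^*, A\Rightarrow^*w\}$; assume $S\in\mathrm{Useful}$. The annotated version $\overline{\mathcal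 G}$ has non-terminals $\overline N=\{(A,X)\in N\times2^N:A\in X\}$, stack symbols $\overline I=I\times 2^N$, start $(S,\mathrm{Useful})$, and productions: $(A,X)\to w$ for $A\to w\in P$, $A\in X$; $(A,X)\to(B,X)(C,X)$ for $A\to BC\in P$, $A,B,C\in X$; $(A,X)\to(B,Y)(f,X)$ for $A\to Bf\in P$ with $Y=f\cdot X$, $A\in X$, $B\in Y$; $(A,Y)(f,X)\to(B,X)$ for $Af\to B\in P$ with $Y=f\cdot X$, $A\in Y$, $B\in X$. For $z=f_n\cdots f_1\in I^*$, $\overline z^X=(f_n,X_n)\cdots(f_1,X_1)$ with $X_1=X$, $X_{i+1}=f_i\cdot X_i$. Assume every $f\in I$ occurs in some production $A\to Bf$ and there are functions $\alpha,\beta:I\to N$ such that every production $A\to Bf$ in $P$ satisfies $A=\alpha(f)$, $B=\beta(f)$. For $X\subseteq N$, $A\,\mathcal R_X\,B$ holds iff $A,B\in X$ and $(A,X)\Rightarrow^*_{\overline{\mathcal G}}u\,(B,X)\,v$ for some sentential forms $u,v$ of $\overline{\mathcal G}$ (with $(B,X)$ having empty stack). The stack monoid $\mathbb M$ has elements: all tuples $(B,Y,M,A,X)$ with $A,B\in N$, $X,Y\subseteq N$, $M\in\mathbb B^{N\times N}$ (Boolean matrices, product over $(\vee,\wedge)$), plus a neutral element $\mathbf 1$ and an absorbing element $\mathbf 0$; product $(B_2,Y_2,M_2,A_2,X_2)\cdot(B_1,Y_1,M_1,A_1,X_1)=(B_2,Y_2,M_1M_2,A_1,X_1)$ if $X_2=Y_1$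 and $B_1\,\mathcal R_{X_2}\,A_2$, and $\mathbf 0$ otherwise. $\varphi:\overline I^*\to\mathbb M$ is the monoid morphism with $\varphi(f,X)=(\beta(f),f\cdot X,M_{f,X},\alpha(f),X)$, where $M_{f,X}(A,B)=\top$ iff $A[f]\Rightarrow^*_{\mathcal G}uBv$ for some $u,v\in(X\cup T)^*$. *)

From Stdlib Require Import Relations.
From mathcomp Require Import all_boot.
From mathcomp Require Import boolp.

Set Implicit Arguments.
Unset Strict Implicit.
Unset Printing Implicit Defensive.

(* A term A[z] (stack z, top on the left) or a terminal. *)
Inductive sym (N I T : Type) :=
| Tm of T
| Nt of N & seq I.
Arguments Tm {N I T}.
Arguments Nt {N I T}.

Record rules (N I T : Type) := Rules {
  r_term : N -> seq T -> Prop;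
  r_bin  : N -> N -> N -> Prop;
  r_push : N -> N -> I -> Prop;       (* A -> B f *)
  r_pop  : N -> I -> N -> Prop        (* A f -> B *)
}.

Inductive step (N I T : Type) (P : rules N I T) :
    seq (sym N I T) -> seq (sym N I T) -> Prop :=
| step_bin u v A B C z : r_bin P A B C ->
    step P (u ++ Nt A z :: v) (u ++ Nt B z :: Nt C z :: v)
| step_push u v A B f z : r_push P A B f ->
    step P (u ++ Nt A z :: v) (u ++ Nt B (f :: z) :: v)
| step_pop u v A B f z : r_pop P A f B ->
    step P (u ++ Nt A (f :: z) :: v) (u ++ Nt B z :: v)
| step_term u v A w z : r_term P A w ->
    step P (u ++ Nt A z :: v) (u ++ map Tm w ++ v).

Definition derives (N I T : Type) (P : rules N I T) := clos_refl_trans _ (step P).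

Record igrammar (N I T : finType) := IGrammar {
  start : N;
  pterm : seq (N * seq T);            (* finitely many A -> w *)
  pbin  : N -> N -> N -> bool;
  ppush : N -> N -> I -> bool;
  ppop  : N -> I -> N -> bool
}.

Section Grammar.
Variables (N I T : finType) (G : igrammar N I T).

Definition rules_of : rules N I T :=
  Rules (fun A w => (A, w) \in pterm G) (fun A B C => pbin G A B C)
        (fun A B f => ppush G A B f) (fun A f B => ppop G A f B).

Definition in_XT (X : {set N}) (u : seq (sym N I T)) : bool :=
  all (fun s => match s with Tm _ => true | Nt B z => (z == [::]) && (B \in X) end) u.

Definition dot (z : seq I) (X : {set N}) : {set N} :=
  [set A | `[< exists u, derives rules_of [:: Nt A z] u /\ in_XT X u >]].

Definition Useful : {set N} :=
  [set A | `[< exists w : seq T, derives rules_of [:: Nt A [::]] (map Tm w) >]].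

Definition Nbar := {p : N * {set N} | p.1 \in p.2}.
Definition Ibar := (I * {set N})%type.

Definition rules_bar : rules Nbar Ibar T :=
  Rules
    (fun a w => ((val a).1, w) \in pterm G)
    (fun a b c => pbin G (val a).1 (val b).1 (val c).1
                  /\ (val b).2 = (val a).2 /\ (val c).2 = (val a).2)
    (fun a b fX => ppush G (val a).1 (val b).1 fX.1
                  /\ fX.2 = (val a).2 /\ (val b).2 = dot [:: fX.1] (val a).2)
    (fun a fX b => ppop G (val a).1 fX.1 (val b).1
                  /\ (val a).2 = dot [:: fX.1] fX.2 /\ (val b).2 = fX.2).

Definition start_bar (HS : start G \in Useful) : Nbar :=
  exist _ (start G, Useful) HS.

(* annotation of z = f_n ... f_1 (top on the left):
   (f_n,X_n) ... (f_1,X_1), X_1 = X, X_{i+1} = f_i . X_i *)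
Fixpoint annot_up (r : seq I) (X : {set N}) : seq Ibar :=
  match r with
  | [::] => [::]
  | f :: r' => (f, X) :: annot_up r' (dot [:: f] X)
  end.
Definition bar (z : seq I) (X : {set N}) : seq Ibar := rev (annot_up (rev z) X).

Definition RX (X : {set N}) (A B : N) : Prop :=
  exists (HA : A \in X) (HB : B \in X), exists u v,
    derives rules_bar [:: Nt (exist _ (A, X) HA : Nbar) [::]]
                      (u ++ Nt (exist _ (B, X) HB : Nbar) [::] :: v).

Definition bmat := {ffun N * N -> bool}.
Definition bmul (M1 M2 : bmat) : bmat :=
  [ffun p => [exists C, M1 (p.1, C) && M2 (C, p.2)]].

Inductive mon :=
| Mone
| Mzero
| Mel of N & {set N} & bmat & N & {set N}.   (* (B, Y, M, A, X) *)

Definition mmul (x y : mon) : mon :=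
  match x, y with
  | Mone, _ => y
  | _, Mone => x
  | Mzero, _ => Mzero
  | _, Mzero => Mzero
  | Mel B2 Y2 M2 A2 X2, Mel B1 Y1 M1 A1 X1 =>
      if (X2 == Y1) && `[< RX X2 B1 A2 >] then Mel B2 Y2 (bmul M1 M2) A1 X1
      else Mzero
  end.

Definition Mf (f : I) (X : {set N}) : bmat :=
  [ffun p => `[< exists u v, derives rules_of [:: Nt p.1 [:: f]]
                    (u ++ Nt p.2 [::] :: v) /\ in_XT X u /\ in_XT X v >]].

Definition phi1 (alpha beta : I -> N) (fX : Ibar) : mon :=
  Mel (beta fX.1) (dot [:: fX.1] fX.2) (Mf fX.1 fX.2) (alpha fX.1) fX.2.

Definition phi (alpha beta : I -> N) (w : seq Ibar) : mon :=
  foldr mmul Mone (map (phi1 alpha beta) w).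

End Grammar.

From mathcomp Require Import all_boot.
From mathcomp Require Import boolp.
From Stdlib Require Import Relations.
From Stdlib Require List.

Set Implicit Arguments.
Unset Strict Implicit.
Unset Printing Implicit Defensive.

(* Follow one symbol back through a derivation: its ancestors form a "spine",
   a path of pairs (non-terminal, stack) each obtained from the previous one by
   a single production, and (C,X) =>* u (D,Y)[z̄] v holds iff there is a spine
   from ((C,X), ε) to ((D,Y), z̄).  Every push of f goes from α(f) to β(f), so
   on such a spine the last push of the bottom symbol (f_1, X_1) of z̄ onto the
   empty stack starts at (α(f_1), X_1) = (A, X), and the last push of the top
   symbol (f_n, X_n) ends at (β(f_n), f_n·X_n) = (B, Y), after which the stack
   never drops below z̄: this yields C R_X A and B R_Y D.  Conversely,
   φ(z̄) ≠ 0 says that consecutive annotated pushes are linked by R, which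
   assembles a spine from ((A,X), ε) to ((B,Y), z̄). *)

Section Spine.
Variables (N I T : Type) (P : rules N I T).

Inductive spine_step : N * seq I -> N * seq I -> Prop :=
| spine_binl A B C z : r_bin P A B C -> spine_step (A, z) (B, z)
| spine_binr A B C z : r_bin P A B C -> spine_step (A, z) (C, z)
| spine_push A B f z : r_push P A B f -> spine_step (A, z) (B, f :: z)
| spine_pop A f B z : r_pop P A f B -> spine_step (A, f :: z) (B, z).

Definition spine := clos_refl_trans _ spine_step.

Lemma step_cat x y w w' : step P w w' -> step P (x ++ w ++ y) (x ++ w' ++ y).
Proof.
have E u s v : x ++ (u ++ s :: v) ++ y = (x ++ u) ++ s :: (v ++ y) by rewrite -!catA.
have E' u s v : x ++ (u ++ s ++ v) ++ y = (x ++ u) ++ s ++ (v ++ y) by rewrite -!catA.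
case=> [u v A B C z|u v A B f z|u v A B f z|u v A w0 z] H; rewrite ?E' !E /=.
- exact: step_bin.
- exact: step_push.
- exact: step_pop.
- exact: step_term.
Qed.

Lemma derives_cat x y w w' :
  derives P w w' -> derives P (x ++ w ++ y) (x ++ w' ++ y).
Proof.
elim=> [a b H|a|a b c _ Hab _ Hbc]; first exact/rt_step/step_cat.
- exact: rt_refl.
- exact: rt_trans Hab Hbc.
Qed.

Lemma spine_derives p q :
  spine p q -> exists u v, derives P [:: Nt p.1 p.2] (u ++ Nt q.1 q.2 :: v).
Proof.
elim=> [a b H|a|a b c _ [u1 [v1 H1]] _ [u2 [v2 H2]]].
- case: H => [A B C z|A B C z|A B f z|A f B z] H /=.
  + by exists [::], [:: Nt C z]; apply/rt_step/(step_bin [::] [::]).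
  + by exists [:: Nt B z], [::]; apply/rt_step/(step_bin [::] [::]).
  + by exists [::], [::]; apply/rt_step/(step_push [::] [::]).
  + by exists [::], [::]; apply/rt_step/(step_pop [::] [::]).
- by exists [::], [::]; apply: rt_refl.
- exists (u1 ++ u2), (v2 ++ v1); apply: rt_trans H1 _.
  by have := derives_cat u1 v1 H2; rewrite -!catA.
Qed.

Lemma step_ancestor w w' b t : step P w w' -> List.In (Nt b t) w' ->
  exists a s, List.In (Nt a s) w /\ spine (a, s) (b, t).
Proof.
have unchanged (u v : seq (sym N I T)) c : List.In (Nt b t) u \/ List.In (Nt b t) v ->
    exists a s, List.In (Nt a s) (u ++ c :: v) /\ spine (a, s) (b, t).
  by move=> Hin; exists b, t; split; [rewrite List.in_app_iff /=; tauto | apply: rt_refl].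
have parent (u v : seq (sym N I T)) A z b' t' : spine_step (A, z) (b', t') ->
    exists a s, List.In (Nt a s) (u ++ Nt A z :: v) /\ spine (a, s) (b', t').
  by move=> H; exists A, z; split; [rewrite List.in_app_iff /=; tauto | apply: rt_step].
case=> [u v A B C z|u v A B f z|u v A B f z|u v A w0 z] H;
  rewrite !List.in_app_iff /=.
- case=> [Hu|[[<- <-]|[[<- <-]|Hv]]]; try by apply: unchanged; tauto.
  + exact: parent (spine_binl _ H).
  + exact: parent (spine_binr _ H).
- case=> [Hu|[[<- <-]|Hv]]; try by apply: unchanged; tauto.
  exact: parent (spine_push _ H).
- case=> [Hu|[[<- <-]|Hv]]; try by apply: unchanged; tauto.
  exact: parent (spine_pop _ H).
- case=> [Hu|[/List.in_map_iff [? []] //|Hv]]; by apply: unchanged; tauto.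
Qed.

Lemma derives_ancestor w w' b t : derives P w w' -> List.In (Nt b t) w' ->
  exists a s, List.In (Nt a s) w /\ spine (a, s) (b, t).
Proof.
move=> D; elim: D b t => [w1 w2 H|w1|w1 w2 w3 _ IH12 _ IH23] b t.
- exact: step_ancestor.
- by move=> Hin; exists b, t; split; last apply: rt_refl.
- case/IH23=> [a [s [/IH12 [a0 [s0 [Hin S0]]] S]]].
  by exists a0, s0; split; last apply: rt_trans S0 S.
Qed.

Lemma derives_spineP a s b t :
  (exists u v, derives P [:: Nt a s] (u ++ Nt b t :: v)) <-> spine (a, s) (b, t).
Proof.
split; last exact: spine_derives.
case=> u [v D].
have Hin : List.In (Nt b t) (u ++ Nt b t :: v) by rewrite List.in_app_iff /=; tauto.
by have [a0 [s0 [[[-> ->]|//] S]]] := derives_ancestor D Hin.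
Qed.

Lemma spine_step_catr s p q :
  spine_step p q -> spine_step (p.1, p.2 ++ s) (q.1, q.2 ++ s).
Proof.
case=> [A B C z|A B C z|A B f z|A f B z] H.
- exact: spine_binl H.
- exact: spine_binr H.
- exact: spine_push H.
- exact: spine_pop H.
Qed.

Lemma spine_catr s p q : spine p q -> spine (p.1, p.2 ++ s) (q.1, q.2 ++ s).
Proof.
elim=> [a b H|a|a b c _ Hab _ Hbc]; first exact/rt_step/spine_step_catr.
- exact: rt_refl.
- exact: rt_trans Hab Hbc.
Qed.

(* Either the stack of [x] already ends in [s], or [s] is created by a last
   push, after which the spine stays above [s]. *)
Lemma spine_suffix_push x y t s : spine x y -> y.2 = t ++ s ->
  (exists t0, x.2 = t0 ++ s) \/
  exists c c' f u, [/\ s = f :: u, spine x (c, u), r_push P c c' f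
                     & spine (c', [::]) (y.1, t)].
Proof.
move/clos_rt_rtn1_iff=> H; elim: H t s => [|p q Hpq Hxp IH] t s Ey.
  by left; exists t.
have Sxp : spine x p by apply/clos_rt_rtn1_iff.
have above t0 t' : p.2 = t0 ++ s -> spine_step (p.1, t0) (q.1, t') ->
    (exists t1, x.2 = t1 ++ s) \/ exists c c' f u, [/\ s = f :: u, spine x (c, u),
       r_push P c c' f & spine (c', [::]) (q.1, t')].
  move=> Ep Hst; case: (IH t0 s Ep) => [|[c [c' [f [u [Es Sxc Hc Sc]]]]]]; first by left.
  by right; exists c, c', f, u; split=> //; apply: rt_trans Sc (rt_step _ _ _ _ Hst).
case: Hpq Ey above Sxp => [A B C z|A B C z|A B f z|A f B z] H /= Ez above Sxp.
- exact: above Ez (spine_binl _ H).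
- exact: above Ez (spine_binr _ H).
- case: t Ez => [|g t] /= Ez.
    by right; exists A, B, f, z; split=> //; apply: rt_refl.
  case: Ez => <- Ez; exact: above Ez (spine_push _ H).
- by apply: (above (f :: t)); [rewrite Ez | apply: spine_pop].
Qed.

End Spine.

Section AnnotatedGrammar.
Variables (N I T : finType) (G : igrammar N I T) (alpha beta : I -> N).

Local Notation spine_bar := (spine (rules_bar G)).
Local Notation phi := (phi G alpha beta).

Lemma size_bar z X : size (bar G z X) = size z.
Proof.
have size_annot r X0 : size (annot_up G r X0) = size r.
  by elim: r X0 => //= f r IH X0; rewrite IH.
by rewrite /bar size_rev size_annot size_rev.
Qed.

Lemma RX_spineP X A B : RX G X A B <->
  exists a b : Nbar N, [/\ val a = (A, X), val b = (B, X) & spine_bar (a, [::]) (b, [::])].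
Proof.
split=> [[HA [HB /derives_spineP S]]|[[[a x] Ha] [[[b y] Hb] [/= [Ea Ex] [Eb Ey] S]]]].
  by exists (exist _ (A, X) HA), (exist _ (B, X) HB).
by subst; exists Ha, Hb; apply/derives_spineP.
Qed.

Lemma phi_cons e w : phi (e :: w) = mmul G (phi1 G alpha beta e) (phi w).
Proof. by []. Qed.

Lemma phi_cons_neq1 e w : phi (e :: w) <> Mone N.
Proof. by rewrite phi_cons /=; case: (phi w) => //= *; case: ifP. Qed.

Lemma phi_Mel_ends e w B Y M A X : phi (e :: w) = Mel B Y M A X ->
  [/\ B = beta e.1, Y = dot G [:: e.1] e.2, A = alpha (last e w).1 & X = (last e w).2].
Proof.
elim: w e B Y M A X => [|e' w IH] e B Y M A X; first by case=> <- <- _ <- <-.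
rewrite phi_cons; case E: (phi (e' :: w)) => [||B1 Y1 M1 A1 X1] //.
  by have := @phi_cons_neq1 e' w.
rewrite /= /phi1; case: ifP => // _ [<- <- _ <- <-].
by have [_ _ -> ->] := IH _ _ _ _ _ _ E.
Qed.

Hypothesis push_occurs : forall f : I, exists A B : N, ppush G A B f.
Hypothesis push_ends : forall (A B : N) (f : I),
  ppush G A B f -> A = alpha f /\ B = beta f.

Lemma ppush_alpha_beta f : ppush G (alpha f) (beta f) f.
Proof. by have [A [B /[dup] H /push_ends [<- <-]]] := push_occurs f. Qed.

Lemma push_barP (c c' : Nbar N) (f : Ibar N I) : r_push (rules_bar G) c c' f <->
  val c = (alpha f.1, f.2) /\ val c' = (beta f.1, dot G [:: f.1] f.2).
Proof.
case: c c' => [[a x] Hax] [[b y] Hby] /=; split.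
  by case=> /push_ends [-> ->] [-> ->].
by case=> [[-> ->] [-> ->]]; split; first exact: ppush_alpha_beta.
Qed.

Lemma phi_Mel_spine e w B Y M A X (a b : Nbar N) : phi (e :: w) = Mel B Y M A X ->
  val a = (A, X) -> val b = (B, Y) -> spine_bar (a, [::]) (b, e :: w).
Proof.
elim: w e B Y M A X a b => [|e' w IH] e B Y M A X a b.
  by case=> <- <- _ <- <- Ea Eb; apply/rt_step/spine_push/push_barP.
rewrite phi_cons; case E: (phi (e' :: w)) => [||B1 Y1 M1 A1 X1] //.
  by have := @phi_cons_neq1 e' w.
rewrite /= /phi1; case: ifP => // /andP [/eqP EY1 /asboolP R] [<- <- _ <- <-] Ea Eb.
have [b1 [c [Eb1 Ec Sb1c]]] := (RX_spineP _ _ _).1 R.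
apply: rt_trans (IH _ _ _ _ _ _ _ b1 E Ea _) _; first by rewrite Eb1 EY1.
apply: rt_trans (spine_catr (e' :: w) Sb1c) _.
exact/rt_step/spine_push/push_barP.
Qed.

Lemma spine_push_top (a d : Nbar N) e w : spine_bar (a, [::]) (d, e :: w) ->
  exists b : Nbar N,
    val b = (beta e.1, dot G [:: e.1] e.2) /\ spine_bar (b, [::]) (d, [::]).
Proof.
move/(spine_suffix_push (t := [::]) (s := e :: w)) => /(_ erefl) [[t0 /=]|].
  by case: t0.
by case=> c [c' [f [u [[<- _] _ /push_barP [_ Ec'] Sc']]]]; exists c'.
Qed.

Lemma spine_push_bottom (a d : Nbar N) t e : spine_bar (a, [::]) (d, rcons t e) ->
  exists c : Nbar N, val c = (alpha e.1, e.2) /\ spine_bar (a, [::]) (c, [::]).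
Proof.
move/(spine_suffix_push (t := t) (s := [:: e])) => /(_ (esym (cats1 t e))) [[t0 /=]|].
  by case: t0.
by case=> c [c' [f [u [[<- <-] Sac /push_barP [Ec _] _]]]]; exists c.
Qed.

End AnnotatedGrammar.

Theorem lemma5p2 (N I T : finType) (G : igrammar N I T) (alpha beta : I -> N)
  (HS : start G \in Useful G)
  (Hocc : forall f : I, exists A B : N, ppush G A B f)
  (Hab : forall (A B : N) (f : I), ppush G A B f -> A = alpha f /\ B = beta f)
  (z : seq I) (X Y : {set N}) (B A : N) (M : bmat N)
  (Hz : z != [::])
  (Hphi : phi G alpha beta (bar G z X) = Mel B Y M A X)
  (C D : N) (HC : C \in X) (HD : D \in Y) :
  (RX G X C A /\ RX G Y B D) <->
  (exists u v : seq (sym (Nbar N) (Ibar N I) T),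
     derives (rules_bar G) [:: Nt (exist _ (C, X) HC : Nbar N) [::]]
             (u ++ Nt (exist _ (D, Y) HD : Nbar N) (bar G z X) :: v)).
Proof.
have [e [w Ez]] : exists e w, bar G z X = e :: w.
  move: Hz; rewrite -size_eq0 -(size_bar G z X).
  by case: (bar G z X) => // e w; exists e, w.
rewrite Ez in Hphi *; have [EB EY EA EX] := phi_Mel_ends Hphi.
split=> [[/RX_spineP [c [a [Ec Ea S_CA]]] /RX_spineP [b [d [Eb Ed S_BD]]]]
        |/derives_spineP S].
- apply/derives_spineP.
  have -> : exist _ (C, X) HC = c by apply: val_inj.
  have -> : exist _ (D, Y) HD = d by apply: val_inj.
  apply: rt_trans S_CA _; apply: rt_trans (phi_Mel_spine Hocc Hab Hphi Ea Eb) _.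
  exact: (spine_catr (e :: w) S_BD).
- split; apply/RX_spineP.
  + move: S; rewrite lastI => /(spine_push_bottom Hocc Hab) [a [Ea S_CA]].
    by exists (exist _ (C, X) HC), a; split; rewrite // Ea EA EX.
  + have [b [Eb S_BD]] := spine_push_top Hocc Hab S.
    by exists b, (exist _ (D, Y) HD); split; rewrite // Eb EB EY.
Qed.
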